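(* Let $p$ be a prime, $s\geq 2$, and let $t_1\geq1,t_2,\dots,t_s$ be nonnegative integers with $t_s\geq 1$; put $N=t_1+\cdots+t_s$. Let $\mathbf{w}_i^{(s)}$ be the $i$th row of $A^{t_1,\dots,t_s}$ (over $\mathbb{Z}_{p^s}$) and $\mathbf{w}_i^{(s+1)}$ the $i$th row of $A^{1,t_1-1,t_2,\dots,t_{s-1},t_s-1}$ (over $\mathbb{Z}_{p^{s+1}}$). Then: (i) $\tilde{\tau}_{s+1}(p^{q}\mathbf{w}_i^{(s+1)})=p^{q}\mathbf{w}_i^{(s)}$ for all $i\in\{2,\dots,N-1\}$ and $q\in\{0,\dots,\sigma_i-1\}$, where $\operatorname{ord}(\mathbf{w}_i^{(s)})=p^{\sigma_i}$; (ii) $\tilde{\tau}_{s+1}(p^{j+1}\mathbf{w}_1^{(s+1)})=p^{j}\mathbf{w}_1^{(s)}$ for all $j\in\{0,\dots,s-1\}$; (iii) $\tilde{\tau}_{s+1}(\mathbf{w}_1^{(s+1)})=\mathbf{w}_N^{(s)}$.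
   Context: For $r\geq1$ and $u\in\mathbb{Z}_{p^r}$ with $p$-ary expansion $u=\sum_{i=0}^{r-1}u_ip^i$, $\phi_r(u)=(u_{r-1},\dots,u_{r-1})+(u_0,\dots,u_{r-2})Y_{r-1}\in\mathbb{Z}_p^{p^{r-1}}$, where $Y_1=(0\ 1\ \cdots\ p-1)$ and $Y_k$ has first $k-1$ rows $(Y_{k-1}\ \cdots\ Y_{k-1})$ ($p$ copies) and last row $(0,\dots,0,1,\dots,1,\dots,p-1,\dots,p-1)$ (blocks of length $p^{k-1}$); $\phi_1=\mathrm{id}$; $\Phi_r$ applies $\phi_r$ coordinatewise and concatenates (it is injective). For $r\geq 2$, $\gamma_r$ is the permutation of $\mathbb{Z}_p^{p^{r-1}}$ given by $\gamma_r(\mathbf{x})_{j+ip+1}=\mathbf{x}_{jp^{r-2}+i+1}$ for $j\in\{0,\dots,p-1\}$, $i\in\{0,\dots,p^{r-2}-1\}$. Define $\tau_r:\mathbb{Z}_{p^r}\to\mathbb{Z}_{p^{r-1}}^p$ by $\tau_r(u)=\Phi_{r-1}^{-1}(\gamma_r^{-1}(\phi_r(u)))$. For $\mathbf{u}=(u_1,\dots,u_n)\in\mathbb{Z}_{p^r}^n$ with $\tau_r(u_i)=(u_{i,1},\dots,u_{i,p})$, set $\tilde{\tau}_r(\mathbf{u})=(u_{1,1},u_{2,1},\dots,u_{n,1},u_{1,2},\dots,u_{n,2},\dots,u_{1,p},\dots,u_{n,p})\in\mathbb{Z}_{p^{r-1}}^{pn}$. For $\mathbb{Z}_{p^r}$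 and $1\le i\le r$ let $T_i=\{jp^{i-1}:0\le j\le p^{r-i+1}-1\}$. The matrix $A^{a_1,\dots,a_r}$ over $\mathbb{Z}_{p^r}$ ($a_1\geq1$) is built recursively: start with $(1)$; appending a row of type $i$ to $A$ replaces $A$ by the matrix with top part $(A\ \cdots\ A)$ ($p^{r-i+1}$ copies) and new last row consisting of constant blocks $0\cdot p^{i-1},1\cdot p^{i-1},\dots,(p^{r-i+1}-1)p^{i-1}$, each block of the length of a row of $A$; one appends $a_1-1$ rows of type 1, then $a_2$ of type 2, ..., then $a_r$ of type $r$. The order $\operatorname{ord}(\mathbf{u})$ of a vector is the least $m\geq1$ with $m\mathbf{u}=\mathbf{0}$. *)

(* plain nat arithmetic.
   Conventions: an element of Z_m is represented by a nat in [0, m);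
   vectors are [seq nat]; indices in the paper are 1-based, here 0-based
   unless stated otherwise. *)
From mathcomp Require Import all_boot.
Set Implicit Arguments. Unset Strict Implicit. Unset Printing Implicit Defensive.

Section Defs.
Variable p : nat.

Definition digit (u i : nat) : nat := u %/ p ^ i %% p.

(* Y p k i c = entry (row i, column c), 0-indexed, of the matrix Y_k
   (k x p^k).  Y_1 = (0 1 ... p-1); Y_{k+1} has first k rows equal to
   (Y_k ... Y_k) (p copies, column c lies in copy c / p^k at position
   c mod p^k) and last row with constant blocks 0,1,..,p-1 of length p^k. *)
Fixpoint Y (k : nat) : nat -> nat -> nat :=
  match k with
  | 0 => fun _ _ => 0
  | k'.+1 => fun i c =>
      if k' == 0 then c
      else if i < k' then Y k' i (c %% p ^ k') else c %/ p ^ k'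
  end.

(* phi_r : Z_{p^r} -> Z_p^{p^{r-1}},
   phi_r(u) = (u_{r-1},...,u_{r-1}) + (u_0,...,u_{r-2}) Y_{r-1}  (mod p);
   for r = 1 this is the identity on Z_p. *)
Definition phi (r u : nat) : seq nat :=
  [seq (digit u r.-1 + \sum_(i < r.-1) digit u i * Y r.-1 i c) %% p
  | c <- iota 0 (p ^ r.-1)].

Definition Phi (r : nat) (v : seq nat) : seq nat := flatten (map (phi r) v).

Definition gamma (r : nat) (x : seq nat) : seq nat :=
  [seq nth 0 x ((k %% p) * p ^ (r - 2) + k %/ p) | k <- iota 0 (p ^ r.-1)].

(* tau_r(u) = Phi_{r-1}^{-1}(gamma_r^{-1}(phi_r(u))) in Z_{p^{r-1}}^p,
   i.e. the (unique, Phi_{r-1} being injective) v with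
   Phi_{r-1}(v) = gamma_r^{-1}(phi_r u), equivalently
   gamma_r(Phi_{r-1}(v)) = phi_r(u).  Default nseq p 0 if none exists. *)
Definition tau (r u : nat) : seq nat :=
  odflt (nseq p 0)
    (omap (fun v : p.-tuple 'I_(p ^ r.-1) => map val (tval v))
       [pick v : p.-tuple 'I_(p ^ r.-1) |
          gamma r (Phi r.-1 (map val (tval v))) == phi r u]).

Definition tau_tilde (r : nat) (u : seq nat) : seq nat :=
  flatten [seq [seq nth 0 (tau r x) k | x <- u] | k <- iota 0 p].

Definition scal (r c : nat) (w : seq nat) : seq nat :=
  [seq (c * x) %% p ^ r | x <- w].

(* ord(w) over Z_{p^r}: least m >= 1 with m w = 0 (p^r always works) *)
Definition ordv (r : nat) (w : seq nat) : nat :=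
  (find (fun m => all (fun x => m * x %% p ^ r == 0) w) (iota 1 (p ^ r))).+1.

Definition appendrow (r i : nat) (A : seq (seq nat)) : seq (seq nat) :=
  rcons [seq flatten (nseq (p ^ (r - i + 1)) w) | w <- A]
        (flatten [seq nseq (size (head [::] A)) (j * p ^ (i - 1))
                 | j <- iota 0 (p ^ (r - i + 1))]).

(* A^{a_1,...,a_r} over Z_{p^r}, with r = size a: start from (1), append
   a_1 - 1 rows of type 1, then a_2 rows of type 2, ..., a_r rows of type r. *)
Definition Amat (a : seq nat) : seq (seq nat) :=
  foldl (fun A ik => iter ik.2 (appendrow (size a) ik.1) A) [:: [:: 1]]
        (zip (iota 1 (size a)) ((head 0 a).-1 :: behead a)).

(* i-th row, 1-indexed *)
Definition row_of (A : seq (seq nat)) (i : nat) : seq nat := nth [::] A i.-1.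

End Defs.

From mathcomp Require Import all_boot zify.
Set Implicit Arguments. Unset Strict Implicit. Unset Printing Implicit Defensive.

(* A = A^{t_1,...,t_s} arises from A' = A^{t_1,...,t_{s-1},t_s - 1} by appending
   one row of type s: this repeats every row of A' p times and adds the row of
   constant blocks 0, p^{s-1}, ..., (p-1) p^{s-1}.  The matrix B is built by the
   same appends as A', each of type one higher and over Z_{p^{s+1}}, so B is A'
   with every row but the first (all ones) multiplied by p.  The three claims
   then reduce to tau_{s+1}(p y) = (y, ..., y) and
   tau_{s+1}(1) = (0, p^{s-1}, ..., (p-1) p^{s-1}), which are checked on the
   p-ary digits: Y_k lists the digits of its column indices, so phi_r(u) at
   column c is u_{r-1} + sum_i u_i c_i mod p. *)

Lemma nth_flatten_uniform (T : Type) (x0 : T) (F : nat -> seq T) L vs m :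
  0 < L -> (forall v, size (F v) = L) -> m < size vs * L ->
  nth x0 (flatten (map F vs)) m = nth x0 (F (nth 0 vs (m %/ L))) (m %% L).
Proof.
move=> L_gt0 sizeF; elim: vs m => [|v vs IH] m //= m_lt.
rewrite nth_cat sizeF; case: ltnP => [mL|Lm]; first by rewrite divn_small ?modn_small.
rewrite IH; last by move: m_lt; rewrite mulSn; lia.
by rewrite -{3 4}(subnK Lm) divnDr ?dvdnn // divnn L_gt0 addn1 modnDr.
Qed.

Lemma map_flatten_nseq (S T : Type) (f : S -> T) k w :
  map f (flatten (nseq k w)) = flatten (nseq k (map f w)).
Proof. by rewrite map_flatten map_nseq. Qed.

Section Digits.
Variable p : nat.
Hypothesis p_gt1 : 1 < p.
Let p_gt0 : 0 < p. Proof. exact: ltnW. Qed.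

Lemma digit_lt u i : digit p u i < p.
Proof. by rewrite ltn_mod. Qed.

Lemma digit0 i : digit p 0 i = 0.
Proof. by rewrite /digit div0n mod0n. Qed.

Lemma digit_modexp c k i : i < k -> digit p (c %% p ^ k) i = digit p c i.
Proof.
move=> ik; rewrite /digit divn_modl ?dvdn_exp2l 1?ltnW //.
rewrite -expnB ?(ltnW ik) //; apply: modn_dvdm.
by rewrite -(subnSK ik) expnS dvdn_mulr.
Qed.

Lemma digit_mulexp j n i :
  j < p -> digit p (j * p ^ n) i = if i == n then j else 0.
Proof.
move=> jp; rewrite /digit; case: ltngtP => ni.
- rewrite -(subnK (ltnW ni)) expnD mulnA mulnK ?expn_gt0 ?p_gt0 //.
  by apply/eqP; rewrite -/(dvdn p _) dvdn_mull // -(subnSK ni) expnS dvdn_mulr.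
- rewrite divn_small ?mod0n //; apply: (@leq_trans (p ^ n.+1)).
    by rewrite expnS ltn_mul2r jp expn_gt0 p_gt0.
  by rewrite leq_exp2l.
- by rewrite ni mulnK ?expn_gt0 ?p_gt0 // modn_small.
Qed.

Lemma digit_exp n i : digit p (p ^ n) i = (i == n).
Proof. by rewrite -[p ^ n]mul1n digit_mulexp //; case: eqP. Qed.

Lemma digit_mulp_succ y i : digit p (p * y) i.+1 = digit p y i.
Proof. by rewrite /digit expnS divnMA mulKn. Qed.

Lemma digit_mulp0 y : digit p (p * y) 0 = 0.
Proof. by rewrite /digit expn0 divn1 mulnC modnMl. Qed.

Lemma digit_divp k i : digit p (k %/ p) i = digit p k i.+1.
Proof. by rewrite /digit expnS divnMA. Qed.

Lemma eq_digits r u u' : u < p ^ r -> u' < p ^ r ->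
  (forall i, i < r -> digit p u i = digit p u' i) -> u = u'.
Proof.
elim: r u u' => [|r IH] u u'; first by rewrite expn0 !ltnS !leqn0 => /eqP-> /eqP->.
move=> u_lt u'_lt eq_d; rewrite (divn_eq u p) (divn_eq u' p).
have := eq_d 0 isT; rewrite /digit expn0 !divn1 => ->.
congr (_ * _ + _); apply: IH; rewrite ?ltn_divLR -?expnSr // => i ir.
by rewrite !digit_divp eq_d.
Qed.

End Digits.

Section Tau.
Variable p : nat.
Hypothesis p_gt1 : 1 < p.
Let p_gt0 : 0 < p. Proof. exact: ltnW. Qed.
Let pexp_gt0 n : 0 < p ^ n. Proof. by rewrite expn_gt0 p_gt0. Qed.

Lemma Y_digit k i c : i < k -> c < p ^ k -> Y p k i c = digit p c i.
Proof.
elim: k i c => [//|k IH] i c ik ck /=; case: eqP => [k0|/eqP k_neq0].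
  by move: ik ck; rewrite k0 ltnS leqn0 expn1 => /eqP-> c_lt; rewrite /digit divn1 modn_small.
case: ifP => [ik'|/negbT]; first by rewrite IH ?digit_modexp ?ltn_mod.
rewrite -leqNgt => ki; have -> : i = k by apply/eqP; rewrite eqn_leq -ltnS ik.
by rewrite /digit modn_small // ltn_divLR // -expnS.
Qed.

Lemma size_phi r u : size (phi p r u) = p ^ r.-1.
Proof. by rewrite size_map size_iota. Qed.

Lemma nth_phi r u c : c < p ^ r.-1 -> nth 0 (phi p r u) c =
  (digit p u r.-1 + \sum_(i < r.-1) digit p u i * digit p c i) %% p.
Proof.
move=> c_lt; rewrite (nth_map 0) ?size_iota // nth_iota // add0n.
by congr ((_ + _) %% _); apply: eq_bigr => i _; rewrite Y_digit.
Qed.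

(* Coordinate 0 of phi_{r+1}(u) is the top digit of u, and coordinate p^i
   adds digit i to it. *)
Lemma phi_inj r u u' : u < p ^ r.+1 -> u' < p ^ r.+1 ->
  phi p r.+1 u = phi p r.+1 u' -> u = u'.
Proof.
move=> u_lt u'_lt eq_phi.
have coord c : c < p ^ r -> nth 0 (phi p r.+1 u) c = nth 0 (phi p r.+1 u') c.
  by rewrite eq_phi.
have top : digit p u r = digit p u' r.
  have := coord 0 (pexp_gt0 r); rewrite !nth_phi //=.
  by rewrite !big1 => [|i _|i _]; rewrite ?digit0 ?muln0 // !addn0 !modn_small ?digit_lt.
apply: (@eq_digits p p_gt1 r.+1) => // i; rewrite ltnS leq_eqVlt => /predU1P[-> //|ir].
have sum_exp w : \sum_(j < r) digit p w j * digit p (p ^ i) j = digit p w i.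
  rewrite (bigD1 (Ordinal ir)) //= big1 => [|j /negbTE ne].
    by rewrite digit_exp // eqxx muln1 addn0.
  rewrite digit_exp //; case: eqP => [ji|]; last by rewrite muln0.
  by move: ne; rewrite -(inj_eq val_inj) /= ji eqxx.
have := coord (p ^ i); rewrite ltn_exp2l // => /(_ ir).
rewrite !nth_phi ?ltn_exp2l //= !sum_exp top => /eqP; rewrite eqn_modDl => /eqP.
by rewrite !modn_small ?digit_lt.
Qed.

Lemma size_Phi r a : size (Phi p r a) = size a * p ^ r.-1.
Proof. by elim: a => //= x a IH; rewrite size_cat IH size_phi mulSn. Qed.

Lemma Phi_inj r a b : size a = size b ->
  all (fun x => x < p ^ r.+1) a -> all (fun x => x < p ^ r.+1) b ->
  Phi p r.+1 a = Phi p r.+1 b -> a = b.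
Proof.
elim: a b => [|x a IH] [|y b] //= [sz] /andP[x_lt a_lt] /andP[y_lt b_lt] /eqP.
rewrite eqseq_cat ?size_phi // => /andP[/eqP/(phi_inj x_lt y_lt)-> /eqP].
by move/(IH b sz a_lt b_lt)->.
Qed.

Lemma size_gamma r x : size (gamma p r x) = p ^ r.-1.
Proof. by rewrite size_map size_iota. Qed.

Lemma nth_gamma r x k : k < p ^ r.-1 ->
  nth 0 (gamma p r x) k = nth 0 x ((k %% p) * p ^ (r - 2) + k %/ p).
Proof. by move=> k_lt; rewrite (nth_map 0) ?size_iota // nth_iota. Qed.

Lemma gamma_inj n x y : size x = p ^ n.+1 -> size y = p ^ n.+1 ->
  gamma p n.+2 x = gamma p n.+2 y -> x = y.
Proof.
move=> sx sy eq_gamma; apply: (@eq_from_nth _ 0); rewrite sx // => m m_lt.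
have q_lt : m %/ p ^ n < p by rewrite ltn_divLR // -expnS.
have r_lt : m %% p ^ n < p ^ n by rewrite ltn_mod.
pose k := m %% p ^ n * p + m %/ p ^ n.
have k_lt : k < p ^ n.+1.
  rewrite expnSr; apply: (@leq_trans ((m %% p ^ n).+1 * p)).
    by rewrite mulSn; lia.
  by rewrite leq_mul2r r_lt orbT.
have km : (k %% p) * p ^ (n.+2 - 2) + k %/ p = m.
  rewrite subSS subSS subn0 /k modnMDl divnMDl //.
  by rewrite (modn_small q_lt) (divn_small q_lt) addn0 -divn_eq.
by have := congr1 (nth 0 ^~ k) eq_gamma; rewrite /= !nth_gamma // km.
Qed.

Lemma tau_eq n u vs : size vs = p -> all (fun x => x < p ^ n.+1) vs ->
  gamma p n.+2 (Phi p n.+1 vs) = phi p n.+2 u -> tau p n.+2 u = vs.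
Proof.
move=> size_vs vs_lt def_u; rewrite /tau; case: pickP => [v /eqP def_v | no_v] /=.
  apply: (@Phi_inj n); rewrite ?size_map ?size_tuple //.
    by apply/allP => _ /mapP[w _ ->].
  by apply: (@gamma_inj n); rewrite ?size_Phi ?size_map ?size_tuple ?size_vs -?expnS // def_v.
pose w := pmap (insub : nat -> option 'I_(p ^ n.+1)) vs.
have val_w : map val w = vs.
  rewrite pmap_filter; last exact: insubK.
  by apply/all_filterP; apply/allP => z z_vs /=; rewrite isSome_insub (allP vs_lt).
have size_w : size w == p by rewrite -(size_map val) val_w size_vs.
by have := no_v (Tuple size_w); rewrite /= val_w def_u eqxx.
Qed.

Lemma nth_gamma_Phi n vs k : size vs = p -> k < p ^ n.+1 ->
  nth 0 (gamma p n.+2 (Phi p n.+1 vs)) k =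
  nth 0 (phi p n.+1 (nth 0 vs (k %% p))) (k %/ p).
Proof.
move=> size_vs k_lt.
have k_div : k %/ p < p ^ n by rewrite ltn_divLR // mulnC -expnS.
have k_mod : k %% p < p by rewrite ltn_mod.
rewrite nth_gamma // subSS subSS subn0 /Phi (nth_flatten_uniform _ (pexp_gt0 n)).
- by rewrite divnMDl // (divn_small k_div) addn0 modnMDl (modn_small k_div).
- by move=> v; rewrite size_phi.
rewrite size_vs; apply: (@leq_trans ((k %% p).+1 * p ^ n)).
  by rewrite mulSn addnC ltn_add2r.
by rewrite leq_mul2r k_mod orbT.
Qed.

Lemma tau_mulp n y : y < p ^ n.+1 -> tau p n.+2 (p * y) = nseq p y.
Proof.
move=> y_lt; apply: tau_eq; rewrite ?size_nseq ?all_nseq ?y_lt ?orbT //.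
apply: (@eq_from_nth _ 0); rewrite size_gamma ?size_phi // => k k_lt.
rewrite nth_gamma_Phi ?size_nseq // nth_nseq ltn_mod p_gt0.
rewrite !nth_phi ?k_lt ?ltn_divLR // -?expnSr //=.
rewrite big_ord_recl /= digit_mulp0 // mul0n add0n digit_mulp_succ //.
by congr ((_ + _) %% _); apply: eq_bigr => i _; rewrite digit_divp !digit_mulp_succ.
Qed.

Lemma tau1 n : tau p n.+2 1 = [seq j * p ^ n | j <- iota 0 p].
Proof.
apply: tau_eq; first by rewrite size_map size_iota.
  apply/allP => z /mapP[j]; rewrite mem_iota add0n => /andP[_ jp] ->.
  by rewrite expnS ltn_mul2r jp pexp_gt0.
apply: (@eq_from_nth _ 0); rewrite size_gamma ?size_phi // => k k_lt.
have k_mod : k %% p < p by rewrite ltn_mod.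
rewrite nth_gamma_Phi ?size_map ?size_iota // (nth_map 0) ?size_iota // nth_iota //.
rewrite !nth_phi ?k_lt ?ltn_divLR // -?expnSr //= add0n digit_mulexp // eqxx.
rewrite big1 => [|i _]; last by rewrite digit_mulexp // (ltn_eqF (ltn_ord i)).
rewrite big_ord_recl big1 => [|i _]; last by rewrite -(expn0 p) digit_exp.
by rewrite -(expn0 p) !digit_exp //= mul1n !addn0 add0n /digit divn1 modn_mod.
Qed.

Lemma tau_tilde_mulp n w : all (fun x => x < p ^ n.+1) w ->
  tau_tilde p n.+2 (map (muln p) w) = flatten (nseq p w).
Proof.
move=> w_lt; rewrite /tau_tilde; set S := map _ (iota 0 p).
suff /all_pred1P-> : all (pred1 w) S by rewrite size_map size_iota.
apply/allP => z /mapP[k]; rewrite mem_iota add0n => /andP[_ kp] ->.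
rewrite /= -map_comp -[X in _ == X]map_id; apply/eqP/eq_in_map => x x_w /=.
by rewrite tau_mulp ?(allP w_lt) // nth_nseq kp.
Qed.

Lemma tau_tilde_nseq1 n m :
  tau_tilde p n.+2 (nseq m 1) = flatten [seq nseq m (j * p ^ n) | j <- iota 0 p].
Proof.
rewrite /tau_tilde; congr flatten; apply/eq_in_map => k.
rewrite mem_iota add0n => /andP[_ kp].
by rewrite map_nseq tau1 (nth_map 0) ?size_iota // nth_iota.
Qed.

End Tau.

Section Rows.
Variable p : nat.

Definition build_rows r (ps : seq (nat * nat)) (M : seq (seq nat)) :=
  foldl (fun A ik => iter ik.2 (appendrow p r ik.1) A) M ps.

Definition lift_rows (M : seq (seq nat)) :=
  if M is h :: T then h :: map (map (muln p)) T else [::].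

Lemma Amat_cons y a : Amat p (y :: a) =
  build_rows (size a).+1 (zip (iota 1 (size a).+1) (y.-1 :: a)) [:: [:: 1]].
Proof. by []. Qed.

Lemma appendrow_lift r k M : 0 < k ->
  appendrow p r.+1 k.+1 (lift_rows M) = lift_rows (appendrow p r k M).
Proof.
move=> k_gt0; rewrite /appendrow subSS subn1.
have last_row c : flatten [seq nseq c (j * p ^ k) | j <- iota 0 (p ^ (r - k + 1))] =
    map (muln p) (flatten [seq nseq c (j * p ^ (k - 1)) | j <- iota 0 (p ^ (r - k + 1))]).
  rewrite map_flatten -map_comp; congr flatten; apply: eq_map => j /=.
  by rewrite map_nseq mulnCA -expnS subn1 prednK.
case: M => [|h T] //=.
rewrite map_rcons -!map_comp last_row; congr (_ :: rcons _ _).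
by apply: eq_map => w /=; rewrite map_flatten_nseq.
Qed.

Lemma build_rows_lift r k l M : 0 < k ->
  build_rows r.+1 (zip (iota k.+1 (size l)) l) (lift_rows M) =
  lift_rows (build_rows r (zip (iota k (size l)) l) M).
Proof.
elim: l k M => [//|x l IH] k M k_gt0 /=; rewrite -IH //.
by congr foldl; elim: x => //= x ->; rewrite appendrow_lift.
Qed.

Lemma nth_lift_rows M i : 0 < i ->
  nth [::] (lift_rows M) i = map (muln p) (nth [::] M i).
Proof.
case: M i => [|h T] [|i] //= _; case: (ltnP i (size T)) => [iT|Ti].
  by rewrite (nth_map [::]).
by rewrite !nth_default ?size_map.
Qed.

Lemma nth_lift_rows0 M : nth [::] (lift_rows M) 0 = nth [::] M 0.
Proof. by case: M. Qed.

Lemma size_appendrow r k M : size (appendrow p r k M) = (size M).+1.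
Proof. by rewrite size_rcons size_map. Qed.

Lemma size_build_rows r ps M :
  size (build_rows r ps M) = size M + sumn (unzip2 ps).
Proof.
elim: ps M => [|[k x] ps IH] M; first by rewrite addn0.
rewrite IH addnA; congr (_ + _).
by elim: x => [|x IHx]; rewrite ?addn0 //= size_appendrow IHx addnS.
Qed.

Lemma size_Amat a : 0 < head 0 a -> size (Amat p a) = sumn a.
Proof.
case: a => [//|x a] /= x_gt0.
by rewrite Amat_cons size_build_rows unzip2_zip /= ?size_iota // addnA add1n prednK.
Qed.

Lemma head_appendrow_ones r k M : all (pred1 1) (head [::] M) ->
  all (pred1 1) (head [::] (appendrow p r k M)).
Proof.
case: M => [|h T] /= h1; first by elim: iota.
by elim: (p ^ _) => //= n IH; rewrite all_cat h1.
Qed.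

Lemma head_build_rows_ones r ps M : all (pred1 1) (head [::] M) ->
  all (pred1 1) (head [::] (build_rows r ps M)).
Proof.
elim: ps M => [|[k x] ps IH] M h1 //=; apply: IH.
by elim: x => //= x IHx; apply: head_appendrow_ones.
Qed.

Lemma head_Amat_ones y a : all (pred1 1) (head [::] (Amat p (y :: a))).
Proof. by rewrite Amat_cons; apply: head_build_rows_ones. Qed.

Lemma nth_appendrow_top r M i : i < size M ->
  nth [::] (appendrow p r r M) i = flatten (nseq p (nth [::] M i)).
Proof. by move=> iM; rewrite nth_rcons size_map iM (nth_map [::]) // subnn expn1. Qed.

Lemma nth_appendrow_last r M : nth [::] (appendrow p r r M) (size M) =
  flatten [seq nseq (size (head [::] M)) (j * p ^ r.-1) | j <- iota 0 p].
Proof. by rewrite nth_rcons size_map ltnn eqxx subnn expn1 subn1. Qed.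

Lemma Amat_rcons_succ y a x : Amat p (y :: rcons a x.+1) =
  appendrow p (size a).+2 (size a).+2 (Amat p (y :: rcons a x)).
Proof.
have zip_iota z : zip (iota 1 (size a).+2) (y.-1 :: rcons a z) =
    rcons (zip (iota 1 (size a).+1) (y.-1 :: a)) ((size a).+2, z).
  by rewrite -rcons_cons -[(size a).+2]addn1 iotaD cats1 zip_rcons ?size_iota // addnC.
by rewrite !Amat_cons !size_rcons !zip_iota /build_rows !foldl_rcons.
Qed.

Lemma Amat_cons1 y a : Amat p [:: 1, y.-1 & a] = lift_rows (Amat p (y :: a)).
Proof. exact: (build_rows_lift (size a).+1 (y.-1 :: a) [:: [:: 1]] (ltnSn 0)). Qed.

End Rows.

Lemma scal_map_mulp p r c w :
  scal p r.+1 c (map (muln p) w) = map (muln p) (scal p r c w).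
Proof. by rewrite /scal -!map_comp; apply: eq_map => x /=; rewrite mulnCA expnS muln_modr. Qed.

Lemma scal_mulp p r c w : scal p r.+1 (p * c) w = map (muln p) (scal p r c w).
Proof. by rewrite /scal -map_comp; apply: eq_map => x /=; rewrite -mulnA expnS muln_modr. Qed.

Lemma scal_lt p r c w : 0 < p -> all (fun x => x < p ^ r) (scal p r c w).
Proof. by move=> p_gt0; apply/allP => _ /mapP[x _ ->]; rewrite ltn_mod expn_gt0 p_gt0. Qed.

Theorem proposition2 (p s : nat) (t : seq nat) :
  prime p -> 2 <= s -> size t = s -> 1 <= head 0 t -> 1 <= last 0 t ->
  let N := sumn t in
  let A := Amat p t in
  let B := Amat p (1 :: (head 0 t).-1 :: rcons (take (s - 2) (behead t)) (last 0 t).-1) in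
  (forall i, 2 <= i <= N - 1 -> forall sigma,
      ordv p s (row_of A i) = p ^ sigma -> forall q, q < sigma ->
      tau_tilde p s.+1 (scal p s.+1 (p ^ q) (row_of B i)) = scal p s (p ^ q) (row_of A i))
  /\ (forall j, j < s ->
      tau_tilde p s.+1 (scal p s.+1 (p ^ j.+1) (row_of B 1)) = scal p s (p ^ j) (row_of A 1))
  /\ tau_tilde p s.+1 (row_of B 1) = row_of A N.
Proof.
move=> /prime_gt1 p_gt1; have p_gt0 := ltnW p_gt1.
case: t => [|y t] s_ge2; first by move=> s0; rewrite -s0 in s_ge2.
case/lastP: t => [|m x]; first by move=> s1; rewrite -s1 in s_ge2.
rewrite [size _]/= size_rcons => <- {s s_ge2} y_gt0.
rewrite [last _ _]/= last_rcons; case: x y_gt0 => [//|x] y_gt0 _.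
rewrite subSS subSS subn0 [behead _]/= -cats1 take_size_cat // cats1 => N A B.
pose A' := Amat p (y :: rcons m x).
have defA : A = appendrow p (size m).+2 (size m).+2 A' by apply: Amat_rcons_succ.
have defB : B = lift_rows p A' by apply: Amat_cons1.
have defN : N = (size A').+1 by rewrite size_Amat // /N /= !sumn_rcons !addnS.
have /all_pred1P head_A' : all (pred1 1) (head [::] A') by apply: head_Amat_ones.
rewrite defN /row_of defA defB subn1 !succnK nth_lift_rows0.
have A'_gt0 : 0 < size A' by rewrite size_Amat //; apply: ltn_addr.
split; [|split].
- case=> [//|i] /andP[i_gt0 i_lt] sigma _ q _.
  rewrite nth_appendrow_top // nth_lift_rows // scal_map_mulp tau_tilde_mulp ?scal_lt //.
  by rewrite /scal map_flatten_nseq.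
- move=> j _; rewrite nth_appendrow_top // expnS scal_mulp.
  by rewrite tau_tilde_mulp ?scal_lt // /scal map_flatten_nseq.
- by rewrite nth_appendrow_last nth0 {1}head_A' tau_tilde_nseq1.
Qed.
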